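(* Let $f_\mathrm{s}=1/T_\mathrm{s}>0$, $b\in\mathbb{N}$, $\bar\kappa>0$, and let $S_{\mathsf{x}}(f)\ge 0$ be a power spectral density supported in $(-f_\mathrm{nyq}/2,f_\mathrm{nyq}/2)$. Consider the problem of maximizing, over nonnegative functions $\bar H:\mathbb{R}\to[0,\infty)$, the objective $$\int_{-f_\mathrm{s}/2}^{f_\mathrm{s}/2}\frac{\sum_{k\in\mathbb{Z}}\bar H(f-kf_\mathrm{s})\,S_{\mathsf{x}}(f-kf_\mathrm{s})}{\sum_{k'\in\mathbb{Z}}\bar H(f-k'f_\mathrm{s})+2^{-2b}}\,\mathrm{d}f$$ subject to $\bar\kappa\,T_\mathrm{s}\int_{-f_\mathrm{s}/2}^{f_\mathrm{s}/2}\sum_{k\in\mathbb{Z}}\bar H(f'-kf_\mathrm{s})\,\mathrm{d}f'=1$. Then the objective is maximized by choosing $\bar H$ such that, for each $\tilde f_0$ with $|\tilde f_0|<f_\mathrm{s}/2$, at most one of the values $\{\bar H(\tilde f_0+kf_\mathrm{s})\}_{k\in\mathbb{Z}}$ is non-zero, and this value corresponds to the $k\in\mathbb{Z}$ with the maximal value among $\{S_{\mathsf{x}}(\tilde f_0+kf_\mathrm{s})\}_{k\in\mathbb{Z}}$; that is, restricting to feasible $\bar H$ with this property does not decrease the achievable objective value.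
   Context: In the paper, $\bar H(f)=|H(f)|^2S_{\mathsf{x}}(f)$ for a pre-sampling filter $H$, and $\bar\kappa=\eta^2\left(1-\frac{2\eta^2}{3\cdot2^{2b}}\right)^{-1}$; the claim concerns only the stated optimization problem. *)

From HB Require Import structures.
From mathcomp Require Import all_boot all_order all_algebra.
From mathcomp Require Import all_classical all_reals all_analysis.
Set Implicit Arguments. Unset Strict Implicit. Unset Printing Implicit Defensive.
Import Order.TTheory GRing.Theory Num.Theory.
Local Open Scope classical_set_scope.
Local Open Scope ring_scope.

Section Defs.
Variable R : realType.

Definition alias_sum (fs : R) (g : R -> R) (f : R) : \bar R :=
  (\esum_(k in [set: int]) (g (f - k%:~R * fs))%:E)%E.

Definition objective (fs : R) (b : nat) (S Hb : R -> R) : \bar R :=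
  (\int[lebesgue_measure]_(f in `[(- (fs / 2))%R, (fs / 2)%R])
     (alias_sum fs (fun x => (Hb x * S x)%R) f *
      (alias_sum fs Hb f + (2 ^- (2 * b))%R%:E)^-1))%E.

Definition feasible (fs kappa : R) (Hb : R -> R) : Prop :=
  measurable_fun setT Hb /\ (forall f, 0 <= Hb f) /\
  ((kappa * fs^-1)%R%:E *
     \int[lebesgue_measure]_(f in `[(- (fs / 2))%R, (fs / 2)%R]) alias_sum fs Hb f = 1)%E.

Definition alias_free_argmax (fs : R) (S Hb : R -> R) : Prop :=
  forall f0, `|f0| < fs / 2 -> forall k : int, Hb (f0 + k%:~R * fs) != 0 ->
    (forall j : int, Hb (f0 + j%:~R * fs) != 0 -> j = k) /\
    (forall j : int, S (f0 + j%:~R * fs) <= S (f0 + k%:~R * fs)).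

End Defs.

From HB Require Import structures.
From mathcomp Require Import all_boot all_order all_algebra.
From mathcomp Require Import all_classical all_reals all_analysis.
From mathcomp Require Import measurable_realfun zify ring lra.
Import Order.TTheory GRing.Theory Num.Theory.
Local Open Scope classical_set_scope.
Local Open Scope ring_scope.

(* For a baseband frequency f, the integrand of the objective depends on Hb only
   through its aliases Hb (f - k fs), and the constraint only through their sum
   A f.  Moving all of A f onto the alias at which S is largest leaves the
   denominator and the constraint unchanged, and can only increase the numerator,
   since sum_k Hb (f - k fs) S (f - k fs) <= A f * max_k S (f - k fs).  Because
   S vanishes outside a bounded band, only finitely many aliases compete, so a
   maximising alias can be selected measurably. *)

Section esum_integral.
Context {R : realType}.
Local Open Scope ereal_scope.

Lemma esum_int_nneseries (a : int -> \bar R) : (forall k, 0 <= a k) ->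
  \esum_(k in [set: int]) a k =
  \sum_(n <oo) a (Posz n) + \sum_(n <oo) a (Negz n).
Proof.
move=> a0; rewrite (esumID (range Posz)) // setTI.
have -> : [set: int] `&` ~` range Posz = range Negz.
  apply/seteqP; split=> [k [_]|_ [n _ <-]]; last by split=> // -[].
  by case: k => n nP; [exfalso; apply: nP | ]; exists n.
rewrite -!(esum_pred_image _ _ xpredT) //; try by move=> x y _ _ [].
by congr (_ + _); congr esum; apply/seteqP; split=> _ [n _ <-]; exists n.
Qed.

Lemma esum_delta {T : choiceType} (t0 : T) (x : \bar R) : 0 <= x ->
  \esum_(t in [set: T]) (if t == t0 then x else 0) = x.
Proof.
move=> x0; rewrite -[RHS](@esum_set1 _ _ t0 (fun=> x)) // [RHS]esum_mkcond.
by apply: eq_esum => t _; rewrite in_set1.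
Qed.

Lemma ge0_esumMr (T : choiceType) (I : set T) (a : T -> \bar R) (r : R) :
  (forall t, 0 <= a t) -> (0 <= r)%R ->
  \esum_(t in I) (a t * r%:E) = (\esum_(t in I) a t) * r%:E.
Proof.
move=> a0 r0; rewrite muleC -ereal_supZl //; last first.
  by apply/set0P; eexists; exists set0; first exact: fsets_set0.
rewrite /esum image_comp; congr (ereal_sup _); apply: eq_imagel => A _ /=.
by rewrite ge0_mule_fsumr //; apply: eq_fsbigr => t _; rewrite muleC.
Qed.

Lemma ge0_le_integral_nonmeasurable d (T : measurableType d)
    (mu : {measure set T -> \bar R}) (D : set T) (f g : T -> \bar R) :
  (forall x, D x -> 0 <= f x) -> (forall x, D x -> f x <= g x) ->
  \int[mu]_(x in D) f x <= \int[mu]_(x in D) g x.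
Proof.
move=> f0 fg; have g0 x : D x -> 0 <= g x.
  by move=> Dx; exact: le_trans (f0 _ Dx) (fg _ Dx).
rewrite !ge0_integralE //; apply: ereal_sup_le => _ /= [h hf <-].
exists h => // x; apply: le_trans (hf x) _.
by rewrite /patch; case: ifP => // /set_mem; exact: fg.
Qed.

Lemma ge0_integral_fine d (T : measurableType d)
    (mu : {measure set T -> \bar R}) (D : set T) (f : T -> \bar R) :
  measurable D -> measurable_fun D f -> (forall x, D x -> 0 <= f x) ->
  \int[mu]_(x in D) f x < +oo ->
  \int[mu]_(x in D) (fine (f x))%:E = \int[mu]_(x in D) f x.
Proof.
move=> mD mf f0 fint.
have intf : mu.-integrable D f.
  apply/integrableP; split => //.
  by rewrite (eq_integral f) // => x /set_mem Dx; rewrite gee0_abs ?f0.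
apply: ae_eq_integral => //.
- by apply/measurable_EFinP; exact: measurableT_comp (fine_measurable _) mf.
- apply: filterS (integrable_ae mD intf) => x fx Dx.
  by rewrite fineK // fx.
Qed.
End esum_integral.

Section first_arg_max.
Context {d : Order.disp_t} {T : orderType d}.

Lemma first_arg_max {n} (v : 'I_n.+1 -> T) : exists i : 'I_n.+1,
  (forall j : 'I_n.+1, (j < i)%N -> (v j < v i)%O) /\ (forall j, (v j <= v i)%O).
Proof.
have [i0 _ i0max] := @arg_maxP _ _ _ ord0 xpredT v erefl.
have [i /eqP vi imin] := @arg_minnP _ i0 (fun j => v j == v i0) val (eqxx _).
exists i; rewrite vi; split=> [j ji|j]; last exact: i0max.
have vj : (v j <= v i0)%O := i0max j isT.
by rewrite lt_neqAle vj andbT; apply: contraTN ji => /imin; rewrite -leqNgt.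
Qed.
End first_arg_max.

Section alias_sum.
Context {R : realType}.
Variable fs : R.

Lemma alias_sum_ge0 {g : R -> R} f :
  (forall x, 0 <= g x) -> (0 <= alias_sum fs g f)%E.
Proof. by move=> g0; apply: esum_ge0 => k _; rewrite lee_fin. Qed.

Lemma measurable_alias_sum {g : R -> R} : measurable_fun setT g ->
  (forall x, 0 <= g x) -> measurable_fun setT (alias_sum fs g).
Proof.
move=> mg g0; rewrite /alias_sum.
under [X in measurable_fun _ X]eq_fun => f.
  rewrite esum_int_nneseries; last by move=> k; rewrite lee_fin.
  over.
have mgk (k : int) : measurable_fun setT (fun f : R => (g (f - k%:~R * fs))%:E).
  by apply/measurable_EFinP; apply: measurableT_comp mg _; exact: measurable_funB.
by apply: emeasurable_funD;
  apply: ge0_emeasurable_sum => // k x _ _; rewrite lee_fin.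
Qed.

Lemma alias_sum_periodic (g : R -> R) f :
  alias_sum fs g (f + fs) = alias_sum fs g f.
Proof.
rewrite /alias_sum (reindex_esum [set: int] [set: int] (fun k => k + 1)%R).
  by apply: eq_esum => k _; rewrite intrD mulrDl mul1r opprD addrACA subrr addr0.
by rewrite setTT_bijective; exists (fun k => k - 1)%R => k; rewrite ?addrK ?subrK.
Qed.

Hypothesis fs_gt0 : 0 < fs.

Definition baseband : set R := `[- (fs / 2), fs / 2[%classic.

Lemma basebandE x : baseband x = (- (fs / 2) <= x < fs / 2).
Proof. by rewrite /baseband /= in_itv. Qed.

Lemma baseband_shift_eq0 {x} {m : int} :
  baseband x -> baseband (x + m%:~R * fs) -> m = 0.
Proof.
rewrite !basebandE => /andP[x1 x2] /andP[y1 y2].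
have : m%:~R < 1%:~R :> R by rewrite -(ltr_pM2r fs_gt0); lra.
have : (-1)%:~R < m%:~R :> R by rewrite -(ltr_pM2r fs_gt0) intrN; lra.
by rewrite !ltr_int; lia.
Qed.

Lemma alias_sum_baseband {f : R} : - (fs / 2) <= f <= fs / 2 ->
  exists2 f0, baseband f0 & forall g, alias_sum fs g f = alias_sum fs g f0.
Proof.
move=> /andP[f1 f2]; have [flt|fge] := ltP f (fs / 2).
  by exists f => //; rewrite basebandE f1.
exists (- (fs / 2)) => [|g].
  by rewrite basebandE lexx /=; move: fs_gt0; lra.
by rewrite -[RHS]alias_sum_periodic; congr alias_sum; lra.
Qed.
End alias_sum.

Section concentrate.
Context {R : realType}.
Variables (fs : R) (S : R -> R) (N : nat).
Hypothesis fs_gt0 : 0 < fs.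
Hypothesis S_ge0 : forall f, 0 <= S f.
Hypothesis mS : measurable_fun setT S.
Hypothesis S_supp : forall y, N%:R * fs <= `|y| -> S y = 0.

Local Notation n := N.*2.+1.

Definition window_shift (i : 'I_n) : int := (i : nat)%:Z - N%:Z.

Definition aliased_S (i : 'I_n) (f : R) : R := S (f + (window_shift i)%:~R * fs).

(* Ties go to the smallest index, so that the sets [best_alias i] partition R. *)
Definition best_alias (i : 'I_n) : set R := \bigcap_(j in [set: 'I_n])
  [set f | if (j < i)%N then aliased_S j f < aliased_S i f
           else aliased_S j f <= aliased_S i f].

Definition concentrate (A : R -> R) (x : R) : R := \sum_(i < n)
  \1_(baseband fs `&` best_alias i) (x - (window_shift i)%:~R * fs) *
  A (x - (window_shift i)%:~R * fs).

Lemma measurable_aliased_S i : measurable_fun setT (aliased_S i).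
Proof. by apply: measurableT_comp mS _; exact: measurable_funD. Qed.

Lemma measurable_best_alias i : measurable (best_alias i).
Proof.
apply: fin_bigcap_measurable; first exact: finite_finset.
have mtrue : measurable [set true] by [].
move=> j _; case: (j < i)%N.
- by have := measurable_fun_ltr (measurable_aliased_S j) (measurable_aliased_S i)
    measurableT mtrue; rewrite setTI.
- by have := measurable_fun_ler (measurable_aliased_S j) (measurable_aliased_S i)
    measurableT mtrue; rewrite setTI.
Qed.

Lemma best_alias_exists f : exists i, best_alias i f.
Proof.
have [i [earlier_lt all_le]] := first_arg_max (fun i : 'I_n => aliased_S i f).
by exists i => j _ /=; case: ifP => [ji|_]; [exact: earlier_lt | exact: all_le].
Qed.

Lemma best_alias_unique f i i' : best_alias i f -> best_alias i' f -> i = i'.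
Proof.
move=> /(_ i' I) /= + /(_ i I) /=.
case: ltngtP => [_|_|/val_inj //].
- by move=> /le_lt_trans le_lt /le_lt; rewrite ltxx.
- by move=> /lt_le_trans lt_le /lt_le; rewrite ltxx.
Qed.

Lemma window_shift_onto {k : int} : (- N%:Z <= k <= N%:Z)%R ->
  exists i : 'I_n, window_shift i = k.
Proof.
move=> /andP[k1 k2]; have kn : (absz (k + N%:Z)%R < n)%N by lia.
by exists (Ordinal kn); rewrite /window_shift /=; lia.
Qed.

Lemma best_alias_max f i : best_alias i f -> `|f| <= fs / 2 ->
  forall k : int, S (f + k%:~R * fs) <= aliased_S i f.
Proof.
move=> fi /ler_normlP[f1 f2] k.
have [kN|kN] := boolP (- N%:Z <= k <= N%:Z)%R.
  have [j <-] := window_shift_onto kN.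
  by have := fi j I; rewrite /=; case: ifP => // _ /ltW.
rewrite S_supp ?S_ge0 //.
have [k1|k1] : (N%:Z + 1 <= k)%R \/ (k <= - N%:Z - 1)%R by lia.
- have : N%:R + 1 <= k%:~R :> R by rewrite -(ler_int R) intrD in k1.
  by rewrite ler_normr => ?; apply/orP; left; nra.
- have : k%:~R <= - N%:R - 1 :> R by rewrite -(ler_int R) intrB intrN in k1.
  by rewrite ler_normr => ?; apply/orP; right; nra.
Qed.

Lemma indic_best_alias_shift {f i} j (m : int) :
  baseband fs f -> best_alias i f ->
  \1_(baseband fs `&` best_alias j) (f + m%:~R * fs)
  = ((m == 0) && (j == i))%:R :> R.
Proof.
move=> bf fi; rewrite indicE.
have [/andP[/eqP-> /eqP->]|not_zero] := boolP ((m == 0) && (j == i)).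
  by rewrite mul0r addr0 mem_set.
rewrite memNset // => -[/(baseband_shift_eq0 _ fs_gt0 bf) m0].
rewrite m0 mul0r addr0 => /best_alias_unique/(_ fi) ji.
by move: not_zero; rewrite m0 ji !eqxx.
Qed.

Lemma concentrate_shift {f i} (A : R -> R) (k : int) :
  baseband fs f -> best_alias i f ->
  concentrate A (f + k%:~R * fs) = if k == window_shift i then A f else 0.
Proof.
move=> bf fi; have shiftE j : f + k%:~R * fs - (window_shift j)%:~R * fs =
    f + (k - window_shift j)%:~R * fs by rewrite intrB; ring.
rewrite /concentrate (bigD1 i) //= big1 => [|j ji]; last first.
  by rewrite shiftE (indic_best_alias_shift _ _ bf fi) (negbTE ji) andbF mul0r.
rewrite shiftE (indic_best_alias_shift _ _ bf fi) eqxx andbT subr_eq0 addr0.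
by case: eqP => [->|_]; rewrite ?subrr ?mul0r ?addr0 ?mul1r.
Qed.

Lemma concentrate_ge0 (A : R -> R) :
  (forall f, 0 <= A f) -> forall x, 0 <= concentrate A x.
Proof.
by move=> A0 x; apply: sumr_ge0 => i _; rewrite mulr_ge0 // indicE ler0n.
Qed.

Lemma measurable_concentrate (A : R -> R) : measurable_fun setT A ->
  measurable_fun setT (concentrate A).
Proof.
move=> mA; apply: measurable_sum => i.
have mshift : measurable_fun setT (fun x : R => x - (window_shift i)%:~R * fs).
  exact: measurable_funB.
apply: measurable_funM; last exact: measurableT_comp mA mshift.
apply: measurableT_comp mshift; apply: measurable_indic.
by apply: measurableI; [exact: measurable_itv | exact: measurable_best_alias].
Qed.

Lemma alias_sum_concentrate {f i} (A : R -> R) :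
  baseband fs f -> best_alias i f -> 0 <= A f ->
  alias_sum fs (concentrate A) f = (A f)%:E.
Proof.
move=> bf fi A0; rewrite /alias_sum -[RHS](esum_delta (- window_shift i)).
  apply: eq_esum => k _; rewrite -mulNr -intrN (concentrate_shift _ _ bf fi).
  by rewrite eqr_oppLR (fun_if EFin).
by rewrite lee_fin.
Qed.

Lemma alias_sum_concentrateM {f i} (A : R -> R) :
  baseband fs f -> best_alias i f -> 0 <= A f ->
  alias_sum fs (fun x => concentrate A x * S x) f = (A f * aliased_S i f)%:E.
Proof.
move=> bf fi A0; rewrite /alias_sum -[RHS](esum_delta (- window_shift i)).
  apply: eq_esum => k _; rewrite -mulNr -intrN (concentrate_shift _ _ bf fi).
  by rewrite eqr_oppLR; case: eqP => [->|_]; rewrite ?mul0r // opprK.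
by rewrite lee_fin; apply: mulr_ge0 => //; exact: S_ge0.
Qed.

Lemma alias_free_argmax_concentrate (A : R -> R) :
  alias_free_argmax fs S (concentrate A).
Proof.
move=> f0 f0_lt k; have bf : baseband fs f0.
  by rewrite basebandE; move/ltr_normlP: f0_lt => [f1 f2]; rewrite f2 andbT; lra.
have [i fi] := best_alias_exists f0.
rewrite (concentrate_shift _ _ bf fi).
have [-> _|] := eqVneq k (window_shift i); last by rewrite eqxx.
split=> j; last exact: best_alias_max (ltW f0_lt) j.
rewrite (concentrate_shift _ _ bf fi).
by have [|_] := eqVneq j (window_shift i); rewrite ?eqxx.
Qed.

Lemma feasible_concentrate (kappa : R) (Hb : R -> R) : 0 < kappa ->
  feasible fs kappa Hb ->
  feasible fs kappa (concentrate (fine \o alias_sum fs Hb)).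
Proof.
move=> kappa_gt0 [mHb [Hb_ge0 Hb_mass]].
have mA := measurable_alias_sum fs mHb Hb_ge0.
have A_ge0 f : 0 <= fine (alias_sum fs Hb f) by apply/fine_ge0/alias_sum_ge0.
split; [|split].
- apply: measurable_concentrate.
  exact: measurableT_comp (fine_measurable _) mA.
- exact: concentrate_ge0.
rewrite -Hb_mass; congr (_ * _)%E.
transitivity (\int[lebesgue_measure]_(f in `[(- (fs / 2))%R, (fs / 2)%R])
                (fine (alias_sum fs Hb f))%:E)%E.
  apply: eq_integral => f /set_mem /=; rewrite in_itv /=.
  move=> /(alias_sum_baseband _ fs_gt0) [f0 bf0 f0E].
  have [i fi] := best_alias_exists f0.
  by rewrite !f0E (alias_sum_concentrate _ bf0 fi (A_ge0 _)).
apply: ge0_integral_fine => //.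
- exact: measurable_funS mA.
- by move=> f _; apply: alias_sum_ge0.
rewrite ltey; apply/eqP => mass_oo; move: Hb_mass.
by rewrite mass_oo gt0_muley ?lte_fin ?divr_gt0.
Qed.

Lemma objective_le_concentrate b (Hb : R -> R) : (forall f, 0 <= Hb f) ->
  (objective fs b S Hb <=
   objective fs b S (concentrate (fine \o alias_sum fs Hb)))%E.
Proof.
move=> Hb_ge0; have c_gt0 : 0 < 2 ^- (2 * b) :> R by rewrite invr_gt0 exprn_gt0.
apply: ge0_le_integral_nonmeasurable => [f _|f].
  rewrite mule_ge0 ?inve_ge0 ?adde_ge0 ?alias_sum_ge0 ?lee_fin ?ltW // => x.
  exact: mulr_ge0.
rewrite /= in_itv /= => /(alias_sum_baseband _ fs_gt0) [f0 bf0 f0E].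
have [i fi] := best_alias_exists f0.
have A_ge0 : 0 <= fine (alias_sum fs Hb f0) by apply/fine_ge0/alias_sum_ge0.
rewrite !f0E (alias_sum_concentrateM _ bf0 fi A_ge0).
rewrite (alias_sum_concentrate _ bf0 fi A_ge0).
have num_le : (alias_sum fs (fun x => (Hb x * S x)%R) f0 <=
               alias_sum fs Hb f0 * (aliased_S i f0)%:E)%E.
  rewrite /alias_sum -ge0_esumMr ?S_ge0 //; last by move=> k; rewrite lee_fin.
  apply: le_esum => k _; rewrite -EFinM lee_fin ler_wpM2l // -mulNr -intrN.
  apply: best_alias_max fi _ (- k).
  by move: bf0; rewrite basebandE ler_norml => /andP[-> /ltW].
have denom_ge0 (x : R) : 0 <= x -> (0 <= (x%:E + (2 ^- (2 * b))%:E)^-1)%E.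
  by move=> x0; rewrite inve_ge0 adde_ge0 // lee_fin ltW.
(* Where the alias sum of Hb is infinite, [fine] gives 0 and the original
   integrand vanishes. *)
move: num_le (alias_sum_ge0 fs f0 Hb_ge0) => /=.
case: (alias_sum fs Hb f0) => [x num_le x0|_ _|//] /=.
- by apply: lee_wpmul2r; rewrite ?denom_ge0 // -EFinM.
- by rewrite addye // invey mule0 mule_ge0 // ?denom_ge0 // lee_fin mul0r.
Qed.
End concentrate.

Theorem lemma2 (R : realType) (fs fnyq kappa : R) (b : nat) (S : R -> R) :
  0 < fs -> 0 < kappa ->
  measurable_fun setT S -> (forall f, 0 <= S f) ->
  (forall f, S f != 0 -> - (fnyq / 2) < f < fnyq / 2) ->
  forall Hb : R -> R, feasible fs kappa Hb ->
  exists Hb' : R -> R,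
    [/\ feasible fs kappa Hb', alias_free_argmax fs S Hb' &
        (objective fs b S Hb <= objective fs b S Hb')%E].
Proof.
move=> fs_gt0 kappa_gt0 mS S_ge0 S_band Hb Hb_feas.
have [N fnyq_lt] : exists N : nat, `|fnyq| < N%:R * fs.
  exists (Num.bound (`|fnyq| / fs)).
  by rewrite -ltr_pdivrMr // archi_boundP // divr_ge0 // ltW.
have S_supp y : N%:R * fs <= `|y| -> S y = 0.
  move=> Ny; apply/eqP; apply: contraTT Ny => /S_band /andP[y_lo y_hi].
  rewrite -ltNge (le_lt_trans _ fnyq_lt) //.
  have : `|y| < fnyq / 2 by rewrite ltr_norml y_lo.
  by have := ler_norm fnyq; have := normr_ge0 y; lra.
exists (concentrate fs S N (fine \o alias_sum fs Hb)); split.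
- exact: feasible_concentrate.
- exact: alias_free_argmax_concentrate.
- exact: objective_le_concentrate Hb_feas.2.1.
Qed.
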